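(* Let $K\in\mathbb{R}^{n_u\times n_x}$, $\underline P\in\mathbb{R}^{\underline m\times n_x}$, $\underline b\in\mathbb{R}^{\underline m}$, $\bar P\in\mathbb{R}^{\bar m\times n_x}$, $\bar b\in\mathbb{R}^{\bar m}$ with $\underline b,\bar b\ge0$, and constraint sets $\mathcal{X}=\mathcal{P}(V^x,v^x)$ with $V^x\in\mathbb{R}^{m_x\times n_x}$, $v^x\in\mathbb{R}^{m_x}$, $v^x>0$, and $\mathcal{U}=\mathcal{P}(V^u,v^u)$ with $V^u\in\mathbb{R}^{m_u\times n_u}$, $v^u\in\mathbb{R}^{m_u}$, $v^u>0$. (a) If for every $i\in\{1,\dots,m_x\}$ there exist $\underline S_{[i]}\in\mathbb{D}_+^{\underline m}$, $\bar S_{[i]}\in\mathbb{D}_+^{\bar m}$ with $$\begin{bmatrix}2v^x_i-\underline b^\top\underline S_{[i]}\underline b-\bar b^\top\bar S_{[i]}\bar b & V^x_i & V^x_i\\ * & \underline P^\top\underline S_{[i]}\underline P & \mathbf 0\\ * & * & \bar P^\top\bar S_{[i]}\bar P\end{bmatrix}\succ0,$$ then $\mathcal{P}(\underline P,\underline b)\oplus\mathcal{P}(\bar P,\bar b)\subseteq\mathcal{X}$. (b) If for every $i\in\{1,\dots,m_u\}$ there exist $\underline R_{[i]}\in\mathbb{D}_+^{\underline m}$, $\bar R_{[i]}\in\mathbb{D}_+^{\bar m}$ with $$\begin{bmatrix}2v^u_i-\underline b^\top\underline R_{[i]}\underline b-\bar b^\top\bar R_{[i]}\bar b & V^u_iK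 & V^u_iK\\ * & \underline P^\top\underline R_{[i]}\underline P & \mathbf 0\\ * & * & \bar P^\top\bar R_{[i]}\bar P\end{bmatrix}\succ0,$$ then $K\mathcal{P}(\underline P,\underline b)\oplus K\mathcal{P}(\bar P,\bar b)\subseteq\mathcal{U}$.
   Context: For $M\in\mathbb{R}^{m\times n}$ and $b\in\mathbb{R}^m$, $\mathcal{P}(M,b):=\{x\in\mathbb{R}^n:-b\le Mx\le b\}$ (componentwise). $M_i$ denotes the $i$-th row of $M$, $b_i$ the $i$-th entry of $b$. $\mathbb{D}_+^m$ is the set of $m\times m$ diagonal matrices with positive diagonal entries. $\succ0$ means symmetric positive definite; $*$ denotes blocks determined by symmetry. $\oplus$ is Minkowski sum, and $K\mathcal{S}:=\{Kx:x\in\mathcal{S}\}$. *)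

From HB Require Import structures.
From mathcomp Require Import all_boot all_order all_algebra.
Set Implicit Arguments. Unset Strict Implicit. Unset Printing Implicit Defensive.
Import Order.TTheory GRing.Theory Num.Theory.
Local Open Scope ring_scope.

Definition polyset (R : realFieldType) (m n : nat)
  (M : 'M[R]_(m, n)) (b : 'cV[R]_m) (x : 'cV[R]_n) : Prop :=
  forall i : 'I_m, - b i 0 <= (M *m x) i 0 <= b i 0.

Definition msum (R : realFieldType) (n : nat) (A B : 'cV[R]_n -> Prop)
  (x : 'cV[R]_n) : Prop :=
  exists y z, A y /\ B z /\ x = y + z.

Definition linimg (R : realFieldType) (p n : nat) (K : 'M[R]_(p, n))
  (A : 'cV[R]_n -> Prop) (u : 'cV[R]_p) : Prop :=
  exists x, A x /\ u = K *m x.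

Definition subset_of (T : Type) (A B : T -> Prop) : Prop :=
  forall x, A x -> B x.

Definition diag_pos (R : realFieldType) (m : nat) (S : 'M[R]_m) : Prop :=
  (forall i j : 'I_m, i != j -> S i j = 0) /\ (forall i : 'I_m, 0 < S i i).

Definition posdef (R : realFieldType) (n : nat) (M : 'M[R]_n) : Prop :=
  M^T = M /\ forall x : 'cV[R]_n, x != 0 -> 0 < (x^T *m M *m x) 0 0.

Definition lmi_block (R : realFieldType) (n : nat) (c : 'M[R]_1)
  (r : 'rV[R]_n) (A B : 'M[R]_n) : 'M[R]_(1 + (n + n)) :=
  block_mx c (row_mx r r) (col_mx r^T r^T) (block_mx A 0 0 B).

(* Evaluate the quadratic form of the LMI of row i at w = (1, y, z) and at
   w = (-1, y, z), with y and z in the two polytopes.  For S diagonal with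
   positive entries, y' P' S P y <= b' S b on P(P, b), so both quadratic parts
   are dominated by the corner entry 2 v_i - b' S b - b' S b, and what is left
   is 0 < 2 v_i +- 2 V_i (y + z), i.e. |V_i (y + z)| < v_i.  Part (b) is the
   same argument for the row V_i K. *)
From HB Require Import structures.
From mathcomp Require Import all_boot all_order all_algebra.
From mathcomp Require Import ring lra.
Import Order.TTheory GRing.Theory Num.Theory.
Local Open Scope ring_scope.

Lemma lmi_block_quad (R : realFieldType) n (c : 'M[R]_1) (r : 'rV_n) A B
    (a : R) (y z : 'cV_n) :
  let w := col_mx a%:M (col_mx y z) in
  (w^T *m lmi_block c r A B *m w) 0 0 =
  a ^+ 2 * c 0 0 + 2 * a * (r *m y) 0 0 + 2 * a * (r *m z) 0 0
  + (y^T *m A *m y) 0 0 + (z^T *m B *m z) 0 0.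
Proof.
rewrite /lmi_block !tr_col_mx tr_scalar_mx !mul_row_block !mul_row_col.
rewrite mul_mx_row !mulmx0 !addr0 !add0r add_row_mx mul_row_col.
rewrite !mulmxDl -!trmx_mul !mul_scalar_mx !mul_mx_scalar -!scalemxAl !mxE; ring.
Qed.

Lemma diag_quad_form (R : realFieldType) m (S : 'M[R]_m) (u : 'cV_m) :
  (forall i j, i != j -> S i j = 0) ->
  (u^T *m S *m u) 0 0 = \sum_j S j j * u j 0 ^+ 2.
Proof.
move=> Sdiag; rewrite mxE; apply: eq_bigr => j _.
rewrite mxE (bigD1 j) //= big1 ?addr0 => [|k kj]; last first.
  by rewrite Sdiag ?mulr0 // eq_sym.
by rewrite mxE; ring.
Qed.

Lemma diag_pos_quad_le (R : realFieldType) m (S : 'M[R]_m) (u b : 'cV_m) :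
  diag_pos S -> (forall j, - b j 0 <= u j 0 <= b j 0) ->
  (u^T *m S *m u) 0 0 <= (b^T *m S *m b) 0 0.
Proof.
move=> [Sdiag Spos] ub; rewrite !diag_quad_form //; apply: ler_sum => j _.
apply: ler_wpM2l; first exact: ltW.
have /andP [lo hi] := ub j.
have sqr_gap_ge0 : 0 <= (b j 0 - u j 0) * (b j 0 + u j 0).
  by apply: mulr_ge0; lra.
rewrite !expr2; lra.
Qed.

Lemma polyset_quad_le {R : realFieldType} {m n} {P : 'M[R]_(m, n)} {b S y} :
  diag_pos S -> polyset P b y ->
  (y^T *m (P^T *m S *m P) *m y) 0 0 <= (b^T *m S *m b) 0 0.
Proof.
move=> Spos yP; rewrite !mulmxA -trmx_mul -[_ *m P *m y]mulmxA.
exact: diag_pos_quad_le.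
Qed.

Lemma lmi_block_row_bound {R : realFieldType} {n m1 m2} {c : R} {r : 'rV_n}
    {P1 : 'M_(m1, n)} {b1} {P2 : 'M_(m2, n)} {b2 S1 S2 y z} :
  diag_pos S1 -> diag_pos S2 ->
  posdef (lmi_block ((2 * c)%:M - b1^T *m S1 *m b1 - b2^T *m S2 *m b2) r
     (P1^T *m S1 *m P1) (P2^T *m S2 *m P2)) ->
  polyset P1 b1 y -> polyset P2 b2 z -> - c <= (r *m (y + z)) 0 0 <= c.
Proof.
move=> S1pos S2pos [_ pd] yP zP.
have q1 := polyset_quad_le S1pos yP; have q2 := polyset_quad_le S2pos zP.
have w_neq0 (a : R) : a != 0 -> col_mx a%:M (col_mx y z) != 0.
  move=> a_neq0; rewrite col_mx_eq0 negb_and; apply/orP; left.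
  by apply: contraNneq a_neq0 => /matrixP/(_ 0 0); rewrite !mxE /= mulr1n => ->.
have := pd _ (w_neq0 1 (oner_neq0 R)).
have N1_neq0 : -1 != 0 :> R by rewrite oppr_eq0 oner_eq0.
have := pd _ (w_neq0 (-1) N1_neq0).
rewrite !lmi_block_quad mulmxDr; move: q1 q2.
(* Keep [mxE] from unfolding the quadratic forms into sums. *)
set qy := y^T *m _ *m y; set qz := z^T *m _ *m z.
rewrite !mxE /= mulr1n; lra.
Qed.

Theorem mainTheorem4 (R : realFieldType) (nu nx ml mb mx mu : nat)
  (K : 'M[R]_(nu, nx))
  (Pl : 'M[R]_(ml, nx)) (bl : 'cV[R]_ml)
  (Pb : 'M[R]_(mb, nx)) (bb : 'cV[R]_mb)
  (Vx : 'M[R]_(mx, nx)) (vx : 'cV[R]_mx)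
  (Vu : 'M[R]_(mu, nu)) (vu : 'cV[R]_mu) :
  (forall i, 0 <= bl i 0) -> (forall i, 0 <= bb i 0) ->
  (forall i, 0 < vx i 0) -> (forall i, 0 < vu i 0) ->
  ((forall i : 'I_mx, exists (Sl : 'M[R]_ml) (Sb : 'M[R]_mb),
       diag_pos Sl /\ diag_pos Sb /\
       posdef (lmi_block ((2 * vx i 0)%:M - bl^T *m Sl *m bl - bb^T *m Sb *m bb)
                         (row i Vx) (Pl^T *m Sl *m Pl) (Pb^T *m Sb *m Pb))) ->
    subset_of (msum (polyset Pl bl) (polyset Pb bb)) (polyset Vx vx))
  /\
  ((forall i : 'I_mu, exists (Rl : 'M[R]_ml) (Rb : 'M[R]_mb),
       diag_pos Rl /\ diag_pos Rb /\
       posdef (lmi_block ((2 * vu i 0)%:M - bl^T *m Rl *m bl - bb^T *m Rb *m bb)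
                         (row i Vu *m K) (Pl^T *m Rl *m Pl) (Pb^T *m Rb *m Pb))) ->
    subset_of (msum (linimg K (polyset Pl bl)) (linimg K (polyset Pb bb)))
              (polyset Vu vu)).
Proof.
move=> _ _ _ _; split.
- move=> lmi _ [y [z [yP [zP ->]]]] i.
  have [Sl [Sb [Slpos [Sbpos pd]]]] := lmi i.
  have -> : (Vx *m (y + z)) i 0 = (row i Vx *m (y + z)) 0 0.
    by rewrite -row_mul [in RHS]mxE.
  exact: lmi_block_row_bound Slpos Sbpos pd yP zP.
- move=> lmi _ [_ [_ [[y [yP ->]] [[z [zP ->]] ->]]]] i.
  have [Rl [Rb [Rlpos [Rbpos pd]]]] := lmi i.
  have -> : (Vu *m (K *m y + K *m z)) i 0 = (row i Vu *m K *m (y + z)) 0 0.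
    by rewrite -mulmxDr mulmxA -!row_mul [in RHS]mxE.
  exact: lmi_block_row_bound Rlpos Rbpos pd yP zP.
Qed.
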